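(* Let $k\ge 3$ be an integer and $F$ a field admitting a primitive $(k-1)$-th root of unity. Let $A,B$ be associative $F$-algebras and $\varphi:A\to B$ an $F$-linear map with $\varphi(P_k(A))\subseteq P_k(B)$. If $e,f\in P_k(A)$ satisfy $ef=fe=0$, then $\varphi(e)\varphi(f)=\varphi(f)\varphi(e)$. If moreover $\mathrm{char}(F)\nmid k$, then $\varphi(e)\varphi(f)=\varphi(f)\varphi(e)=0$.
   Context: For a ring $A$ and an integer $k\ge 2$, $P_k(A)=\{a\in A: a^k=a\}$ is the set of $k$-potents. *)

From HB Require Import structures.
From mathcomp Require Import all_boot all_order all_algebra.
Set Implicit Arguments. Unset Strict Implicit. Unset Printing Implicit Defensive.
Import Order.TTheory GRing.Theory Num.Theory.
Local Open Scope ring_scope.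

Record nuAlgebra (F : fieldType) := NuAlgebra {
  nua_sort :> lmodType F;
  nua_mul : nua_sort -> nua_sort -> nua_sort;
  nua_mulA : associative nua_mul;
  nua_mulDl : left_distributive nua_mul +%R;
  nua_mulDr : right_distributive nua_mul +%R;
  nua_scalerAl : forall (a : F) (x y : nua_sort), nua_mul (a *: x) y = a *: nua_mul x y;
  nua_scalerAr : forall (a : F) (x y : nua_sort), nua_mul x (a *: y) = a *: nua_mul x y
}.

(* nua_pow A x n = x^(n+1)  (positive powers; no unit needed) *)
Fixpoint nua_pow (F : fieldType) (A : nuAlgebra F) (x : A) (n : nat) : A :=
  match n with
  | 0 => x
  | n'.+1 => nua_mul x (nua_pow x n')
  end.

Definition nua_expn (F : fieldType) (A : nuAlgebra F) (x : A) (k : nat) : A :=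
  nua_pow x k.-1.

Definition kpotent (F : fieldType) (A : nuAlgebra F) (k : nat) (a : A) : Prop :=
  nua_expn a k = a.

From HB Require Import structures.
From mathcomp Require Import all_boot all_order all_algebra.

Set Implicit Arguments.
Unset Strict Implicit.
Unset Printing Implicit Defensive.
Import GRing.Theory.
Local Open Scope ring_scope.

(* Put a = phi e, b = phi f and m = k - 1.  As w^i is a k-potent scalar,
   e + w^i f is k-potent, hence so is a + w^i b, for every i.  Write
   (a + t b)^k = sum_j t^j c_j.  Averaging the identities (a + w^i b)^k = a + w^i b
   against the weights w^(-i) keeps only the components with j = 1 mod m, giving
   m (c_1 + c_k) = m b; since c_k = b^k = b and m != 0 in F, the linear component
   c_1 vanishes.  The linear component of (a + t b)^(k+1) is both a c_1 + b a^k
   and c_1 a + a^k b, so ab = ba.  Then c_1 = k a^(k-1) b, and if k != 0 in F,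
   ab = a^k b = 0. *)

Local Notation mul := nua_mul.
Local Notation pow := nua_pow.

Section NuAlgebraTheory.

Variables (F : fieldType) (B : nuAlgebra F).
Implicit Types (a b x y : B) (t : F).

Lemma nua_mul0r x : mul 0 x = 0.
Proof. by apply: (addrI (mul 0 x)); rewrite -nua_mulDl !addr0. Qed.

Lemma nua_mulr0 x : mul x 0 = 0.
Proof. by apply: (addrI (mul x 0)); rewrite -nua_mulDr !addr0. Qed.

Lemma nua_mulrn x y j : mul x (y *+ j) = mul x y *+ j.
Proof. by rewrite -!scaler_nat nua_scalerAr. Qed.

Lemma nua_mulr_sumr x I (r : seq I) (P : pred I) (G : I -> B) :
  mul x (\sum_(i <- r | P i) G i) = \sum_(i <- r | P i) mul x (G i).
Proof. by elim/big_rec2: _ => [|i y1 y2 _ <-]; rewrite ?nua_mulr0 // nua_mulDr. Qed.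

Lemma nua_powSr x n : pow x n.+1 = mul (pow x n) x.
Proof.
elim: n => [//|n IHn].
by rewrite -[pow x n.+2]/(mul x (pow x n.+1)) [in LHS]IHn nua_mulA.
Qed.

Lemma nua_mul_pow_eq0 x y n : mul x y = 0 -> mul x (pow y n) = 0.
Proof. by case: n => [//|n] /= xy0; rewrite nua_mulA xy0 nua_mul0r. Qed.

Lemma nua_comm_pow x y n : mul x y = mul y x -> mul y (pow x n) = mul (pow x n) y.
Proof.
by move=> cxy; elim: n => [//|n IHn]; rewrite /= nua_mulA -cxy -nua_mulA IHn nua_mulA.
Qed.

Lemma nua_pow_addZ_orth x y t n : mul x y = 0 -> mul y x = 0 ->
  pow (x + t *: y) n = pow x n + t ^+ n.+1 *: pow y n.
Proof.
move=> xy0 yx0; elim: n => [|n IHn]; first by rewrite expr1.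
rewrite /= IHn nua_mulDl !nua_mulDr !nua_scalerAl !nua_scalerAr.
rewrite (nua_mul_pow_eq0 n xy0) (nua_mul_pow_eq0 n yx0).
by rewrite scaler0 addr0 scaler0 add0r scalerA -exprS.
Qed.

Lemma kpotent_addZ_orth k x y t : (0 < k)%N -> t ^+ k = t ->
  kpotent k x -> kpotent k y -> mul x y = 0 -> mul y x = 0 ->
  kpotent k (x + t *: y).
Proof.
rewrite /kpotent /nua_expn => k_gt0 tk xk yk xy0 yx0.
by rewrite nua_pow_addZ_orth // prednK // tk xk yk.
Qed.

(* The coefficient of t^j in (a + t b)^(n+1): the sum of the words of length
   n + 1 in a and b with exactly j letters b. *)
Fixpoint homog_part a b (n j : nat) : B :=
  if n is n'.+1 then
    mul a (homog_part a b n' j) + (if j is j'.+1 then mul b (homog_part a b n' j') else 0)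
  else if j == 0%N then a else if j == 1%N then b else 0.

Lemma homog_partS a b n j : homog_part a b n.+1 j =
  mul a (homog_part a b n j) + (if j is j'.+1 then mul b (homog_part a b n j') else 0).
Proof. by []. Qed.

Lemma homog_part0 a b n : homog_part a b n 0 = pow a n.
Proof. by elim: n => [//|n IHn]; rewrite homog_partS IHn addr0. Qed.

Lemma homog_part_gt a b n j : (n.+1 < j)%N -> homog_part a b n j = 0.
Proof.
elim: n j => [|n IHn] [|j] // lt_nj; first by case: j lt_nj => [|[|j]].
by rewrite homog_partS !IHn ?nua_mulr0 ?addr0 // ltnW.
Qed.

Lemma homog_part_top a b n : homog_part a b n n.+1 = pow b n.
Proof.
by elim: n => [//|n IHn]; rewrite homog_partS IHn homog_part_gt // nua_mulr0 add0r.
Qed.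

Lemma homog_part1S a b n :
  homog_part a b n.+1 1 = mul a (homog_part a b n 1) + mul b (pow a n).
Proof. by rewrite homog_partS homog_part0. Qed.

Lemma homog_part1Sr a b n :
  homog_part a b n.+1 1 = mul (homog_part a b n 1) a + mul (pow a n) b.
Proof.
elim: n => [|n IHn]; first by rewrite homog_part1S addrC.
rewrite [in LHS]homog_part1S [in LHS]IHn [in RHS]homog_part1S [in LHS]nua_powSr.
by rewrite nua_mulDr nua_mulDl !nua_mulA -!addrA [_ + mul (mul b _) a]addrC.
Qed.

Lemma nua_pow_addZ a b t n :
  pow (a + t *: b) n = \sum_(j < n.+2) t ^+ j *: homog_part a b n j.
Proof.
elim: n => [|n IHn].
  by rewrite !big_ord_recr big_ord0 /= add0r expr0 scale1r expr1.
rewrite /= IHn nua_mulDl !nua_mulr_sumr.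
under [in RHS]eq_bigr => j _ do rewrite scalerDr.
rewrite big_split /=; congr (_ + _).
  rewrite [in RHS]big_ord_recr /= homog_part_gt // nua_mulr0 scaler0 addr0.
  by apply: eq_bigr => j _; rewrite nua_scalerAr.
rewrite [in RHS]big_ord_recl /= scaler0 add0r.
by apply: eq_bigr => j _; rewrite nua_scalerAl nua_scalerAr scalerA -exprS.
Qed.

Lemma homog_part1_eq0_comm a b n :
  pow a n.+1 = a -> homog_part a b n.+1 1 = 0 -> mul a b = mul b a.
Proof.
move=> an a1_0; have := homog_part1S a b n.+1.
by rewrite homog_part1Sr a1_0 nua_mulr0 nua_mul0r !add0r an => ->.
Qed.

Lemma homog_part1_comm a b n :
  mul a b = mul b a -> homog_part a b n.+1 1 = mul (pow a n) b *+ n.+2.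
Proof.
move=> cab; elim: n => [|n IHn]; first by rewrite homog_part1S /= -cab mulr2n.
by rewrite homog_part1S IHn nua_mulrn nua_comm_pow // nua_mulA -mulrSr.
Qed.

Lemma homog_part1_eq0_mul a b n : (n.+2)%:R != 0 :> F ->
  pow a n.+1 = a -> homog_part a b n.+1 1 = 0 -> mul a b = 0.
Proof.
move=> n2F an a1_0; have := homog_part1_comm n (homog_part1_eq0_comm an a1_0).
rewrite a1_0 -scaler_nat => /esym/eqP; rewrite scaler_eq0 (negbTE n2F) /=.
by move=> /eqP anb0; rewrite -an /= -nua_mulA anb0 nua_mulr0.
Qed.

End NuAlgebraTheory.

Arguments homog_part : simpl never.

Section RootsOfUnityAveraging.

Variables (F : fieldType) (m : nat) (w : F).
Hypothesis prim_w : m.-primitive_root w.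

Lemma sum_prim_root_expr e :
  \sum_(i < m) (w ^+ e) ^+ i = if (m %| e)%N then m%:R else 0.
Proof.
case: ifP => [|m_ndvd_e].
  rewrite (prim_order_dvd prim_w) => /eqP ->.
  by under eq_bigr do rewrite expr1n; rewrite sumr_const card_ord.
have we1 : w ^+ e - 1 != 0 by rewrite subr_eq0 -(prim_order_dvd prim_w) m_ndvd_e.
have /esym/eqP := subrX1 (w ^+ e) m.
rewrite exprAC (prim_expr_order prim_w) expr1n subrr mulf_eq0 (negbTE we1).
by move/eqP.
Qed.

Lemma sum_prim_root_coefs (V : lmodType F) N s (c : nat -> V) :
  \sum_(i < m) \sum_(j < N) (w ^+ i) ^+ (j + s) *: c j
    = m%:R *: \sum_(j < N | (m %| j + s)%N) c j.
Proof.
rewrite exchange_big scaler_sumr [RHS]big_mkcond /=; apply: eq_bigr => j _.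
under eq_bigr do rewrite exprAC.
by rewrite -scaler_suml sum_prim_root_expr; case: ifP; rewrite ?scale0r.
Qed.

End RootsOfUnityAveraging.

Lemma homog_part1_eq0 (F : fieldType) (B : nuAlgebra F) (a b : B) n (w : F) :
  (n.+2).-primitive_root w -> pow b n.+2 = b ->
  (forall i, pow (a + w ^+ i *: b) n.+2 = a + w ^+ i *: b) ->
  homog_part a b n.+2 1 = 0.
Proof.
move=> prim_w bk abk.
pose T := \sum_(i < n.+2) (w ^+ i) ^+ n.+1 *: pow (a + w ^+ i *: b) n.+2.
have T_b : T = n.+2%:R *: b.
  rewrite /T; under eq_bigr => i _ do rewrite abk scalerDr scalerA -exprSr !(exprAC w i).
  rewrite big_split /= -!scaler_suml !sum_prim_root_expr //.
  by rewrite gtnNdvd // dvdnn scale0r add0r.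
have T_parts : T = n.+2%:R *: (homog_part a b n.+2 1 + b).
  rewrite /T; under eq_bigr do rewrite nua_pow_addZ scaler_sumr.
  under eq_bigr do under eq_bigr do rewrite scalerA -exprD addnC.
  rewrite sum_prim_root_coefs // big_mkcond big_ord_recr big_ord_recl big_ord_recl.
  rewrite big1 => [|j _]; last first.
    by rewrite ifF //= /bump /= !add1n addSnnS dvdn_addl // gtnNdvd // ltnS.
  rewrite /= gtnNdvd // dvdnn addSnnS addnn -muln2 dvdn_mulr // /bump /=.
  by rewrite homog_part_top bk add0r addr0.
move/eqP: T_parts; rewrite T_b eq_sym -subr_eq0 -scalerBr scaler_eq0.
by rewrite (negbTE (prim_root_natf_neq0 prim_w)) addrK => /eqP.
Qed.

Theorem lemma7p2 (F : fieldType) (k : nat) (A B : nuAlgebra F)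
  (phi : {linear nua_sort A -> nua_sort B}) :
  (3 <= k)%N ->
  (exists w : F, (k.-1).-primitive_root w) ->
  (forall a : A, kpotent k a -> kpotent k (phi a)) ->
  forall e f : A, kpotent k e -> kpotent k f ->
    nua_mul e f = 0 -> nua_mul f e = 0 ->
    nua_mul (phi e) (phi f) = nua_mul (phi f) (phi e) /\
    ((forall p : nat, p \in [pchar F] -> ~~ (p %| k)%N) ->
       nua_mul (phi e) (phi f) = 0 /\ nua_mul (phi f) (phi e) = 0).
Proof.
case: k => [|[|[|n]]] // _ [w /= prim_w] phi_kpot e f ek fk ef0 fe0.
have comb_kpot i : kpotent n.+3 (phi e + w ^+ i *: phi f).
  rewrite -linearZ -linearD; apply/phi_kpot/kpotent_addZ_orth => //.
  by rewrite exprAC exprS (prim_expr_order prim_w) mulr1.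
have ak : pow (phi e) n.+2 = phi e := phi_kpot _ ek.
have bk : pow (phi f) n.+2 = phi f := phi_kpot _ fk.
have a1_0 := homog_part1_eq0 prim_w bk comb_kpot.
have cab := homog_part1_eq0_comm ak a1_0.
split=> // pchar_ndvd_k.
have kF : n.+3%:R != 0 :> F.
  rewrite natf_neq0_pchar; apply/pnatP => // p _ p_dvd.
  by rewrite inE /=; apply: contraL p_dvd; exact: pchar_ndvd_k.
have ab0 := homog_part1_eq0_mul kF ak a1_0.
by rewrite -cab ab0.
Qed.
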